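(* Let $f_0,f_1$ be finitely supported probability distributions on $G$ and let $(f_t)_{t\in[0,1]}$ be a $W_1$-geodesic joining them. Let $0\le s\le t\le1$ and let $x,y$ be adjacent vertices such that $x\to y$ for the $W_1$-orientation with respect to $(f_s,f_t)$. Then $x\to y$ for the $W_1$-orientation with respect to $(f_0,f_1)$.
   Context: $G$ is a connected, locally finite graph with graph distance $d$. Paths $\gamma(0),\dots,\gamma(n)$ (consecutive vertices adjacent) have length $L(\gamma)=n$, $e_0(\gamma)=\gamma(0)$, $e_1(\gamma)=\gamma(n)$, and are geodesics if $n=d(\gamma(0),\gamma(n))$. Probability distributions are $f:G\to[0,\infty)$ with $\sum f=1$. For probability distributions $\mu,\nu$: $W_1(\mu,\nu)=\inf_\pi\sum d(x,y)\pi(x,y)$ over couplings $\pi$ (nonnegative functions on $G\times G$ with marginals $\mu,\nu$), $\Pi_1(\mu,\nu)$ is the set of minimizers, $\mathcal{C}(\mu,\nu)=\{(x,y):\pi(x,y)>0\text{ for some }\pi\in\Pi_1(\mu,\nu)\}$, and the $W_1$-orientation with respect to $(\mu,\nu)$ declares $x\to y$ (for adjacent $x,y$) iff there exist a geodesic $\gamma$ with $(e_0(\gamma),e_1(\gamma))\in\mathcal{C}(\mu,\nu)$ and $k$ with $\gamma(k)=x$, $\gamma(k+1)=y$. A $W_1$-geodesic is a family $(f_t)_{t\in[0,1]}$ of probability distributions with $W_1(f_s,f_t)=|t-s|W_1(f_0,f_1)$ for all $s,t\in[0,1]$. *)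

From HB Require Import structures.
From mathcomp Require Import all_boot all_order all_algebra.
From mathcomp Require Import all_classical all_reals all_analysis.
Set Implicit Arguments. Unset Strict Implicit. Unset Printing Implicit Defensive.
Import Order.TTheory GRing.Theory Num.Theory.
Local Open Scope classical_set_scope.
Local Open Scope ring_scope.

Section W1.
Context {R : realType} {V : choiceType} (adj : V -> V -> Prop).

Fixpoint walk (x : V) (s : seq V) : Prop :=
  match s with
  | [::] => True
  | y :: s' => adj x y /\ walk y s'
  end.

(** graph distance (in extended reals; +oo if no path) *)
Definition gdist (x y : V) : \bar R :=
  ereal_inf [set ((size s)%:R)%:E | s in [set s | walk x s /\ last x s = y]].

Definition is_geodesic (x : V) (s : seq V) : Prop :=
  walk x s /\ ((size s)%:R)%:E = gdist x (last x s).

Definition locally_finite : Prop := forall x, finite_set [set y | adj x y].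
Definition connected_graph : Prop := forall x y, exists s, walk x s /\ last x s = y.

Definition prob_distr (f : V -> R) : Prop :=
  (forall x, 0 <= f x) /\ (\esum_(x in [set: V]) (f x)%:E = 1)%E.

Definition fin_supp (f : V -> R) : Prop := finite_set [set x | f x != 0].

Definition coupling (mu nu : V -> R) (pi : V * V -> R) : Prop :=
  (forall p, 0 <= pi p) /\
  (forall x, \esum_(y in [set: V]) (pi (x, y))%:E = (mu x)%:E) /\
  (forall y, \esum_(x in [set: V]) (pi (x, y))%:E = (nu y)%:E).

Definition transport_cost (pi : V * V -> R) : \bar R :=
  (\esum_(p in [set: V * V]) (gdist p.1 p.2 * (pi p)%:E))%E.

Definition W1 (mu nu : V -> R) : \bar R :=
  ereal_inf [set transport_cost pi | pi in [set pi | coupling mu nu pi]].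

Definition optimal_coupling (mu nu : V -> R) (pi : V * V -> R) : Prop :=
  coupling mu nu pi /\ transport_cost pi = W1 mu nu.

Definition opt_support (mu nu : V -> R) (x y : V) : Prop :=
  exists pi, optimal_coupling mu nu pi /\ 0 < pi (x, y).

(** W1-orientation: x -> y w.r.t. (mu, nu); gamma = u :: s, gamma(k) = nth u (u :: s) k *)
Definition W1_orient (mu nu : V -> R) (x y : V) : Prop :=
  adj x y /\
  exists (u : V) (s : seq V) (k : nat),
    is_geodesic u s /\ opt_support mu nu u (last u s) /\
    (k < size s)%N /\ nth u (u :: s) k = x /\ nth u (u :: s) k.+1 = y.

Definition W1_geodesic (f : R -> V -> R) : Prop :=
  (forall t, (0 <= t <= 1)%R -> prob_distr (f t)) /\
  (forall s t, (0 <= s <= 1)%R -> (0 <= t <= 1)%R ->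
     W1 (f s) (f t) = (`|t - s|%:E * W1 (f 0%R) (f 1%R))%E).

End W1.

(* Let [pi] be an optimal coupling of (f_s, f_t) charging (u, v), the ends of
   the geodesic carrying the edge x -> y.  Gluing [pi] with almost optimal
   couplings of (f_0, f_s) and (f_t, f_1) along the common marginals gives a
   three-step transport a -> u' -> v' -> b whose cost is at most
   W1(f_0, f_1) + e, because on a W1-geodesic the three distances add up to
   W1(f_0, f_1).  Hence the induced coupling of (f_0, f_1) is almost optimal,
   and the triangle inequality, together with the integrality of graph
   distances, shows that all but a mass e of what it routes through (u, v)
   comes from pairs (a, b) with d(a,b) = d(a,u) + d(u,v) + d(v,b).  As f_0 and
   f_1 are finitely supported, their couplings form a compact set, and a limit
   as e -> 0 is an optimal coupling charging such an aligned pair (a, b).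
   Concatenating geodesics a -> u, u -> v, v -> b yields a geodesic from a to
   b through the edge x -> y. *)

From HB Require Import structures.
From mathcomp Require Import all_boot all_order all_algebra.
From mathcomp Require Import all_classical all_reals all_analysis.
From mathcomp Require Import ring lra.
From mathcomp Require finmap.
Set Implicit Arguments.
Unset Strict Implicit.
Unset Printing Implicit Defensive.
Import Order.TTheory GRing.Theory Num.Theory numFieldNormedType.Exports.
Local Open Scope classical_set_scope.
Local Open Scope ring_scope.

Section esum_lemmas.
Local Open Scope ereal_scope.
Context {R : realType}.

Lemma esum_pairT (T1 T2 : choiceType) (F : T1 * T2 -> \bar R) :
  (forall k, 0 <= F k) ->
  \esum_(k in [set: T1 * T2]) F k =
  \esum_(i in [set: T1]) \esum_(j in [set: T2]) F (i, j).
Proof.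
move=> F0; rewrite (@esum_esum R T1 T2 setT (fun=> setT) (fun i j => F (i, j))) //.
rewrite (_ : [set: T1] `*`` (fun=> [set: T2]) = [set: T1 * T2]); last first.
  by apply/seteqP; split => // -[].
by apply: eq_esum => -[].
Qed.

Lemma exchange_esum (T1 T2 : choiceType) (F : T1 -> T2 -> \bar R) :
  (forall i j, 0 <= F i j) ->
  \esum_(i in [set: T1]) \esum_(j in [set: T2]) F i j =
  \esum_(j in [set: T2]) \esum_(i in [set: T1]) F i j.
Proof.
move=> F0; rewrite -(@esum_pairT T1 T2 (fun k => F k.1 k.2)) //.
rewrite -(@esum_pairT T2 T1 (fun k => F k.2 k.1)) //.
rewrite (reindex_esum [set: T2 * T1] [set: T1 * T2] (fun k => (k.2, k.1))) //.
split=> //; first by move=> [a b] [c d] _ _ [-> ->].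
by move=> [a b] _; exists (b, a).
Qed.

Lemma ge0_esumZl (T : choiceType) (I : set T) (c : R) (a : T -> \bar R) :
  (0 <= c)%R -> (forall i, 0 <= a i) ->
  \esum_(i in I) (c%:E * a i) = c%:E * \esum_(i in I) a i.
Proof.
move=> c0 a0; rewrite /esum -ereal_supZl //; last first.
  by apply/set0P; exists 0; exists set0; [exact: fsets_set0|rewrite fsbig_set0].
congr ereal_sup; apply/seteqP; split => z /=.
- move=> [A HA <-]; exists (\sum_(i \in A) a i); first by exists A.
  by rewrite ge0_mule_fsumr.
- by move=> [w [A HA <-] <-]; exists A => //; rewrite ge0_mule_fsumr.
Qed.

Lemma le_term_esum (T : choiceType) (I : set T) (a : T -> \bar R) i :
  (forall j, 0 <= a j) -> I i -> a i <= \esum_(j in I) a j.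
Proof.
move=> a0 Ii; apply: esum_ge; exists [set i]; last by rewrite fsbig_set1.
by split; [exact: finite_set1 | move=> j ->].
Qed.

Lemma esum_eq0_term (T : choiceType) (a : T -> \bar R) i :
  (forall j, 0 <= a j) -> \esum_(j in [set: T]) a j = 0 -> a i = 0.
Proof.
move=> a0 h; apply/eqP; rewrite eq_le a0 andbT -h.
exact: le_term_esum.
Qed.

Lemma esum_finite_support (T : choiceType) (S : set T) (a : T -> \bar R) :
  finite_set S -> (forall j, 0 <= a j) -> (forall j, ~ S j -> a j = 0) ->
  \esum_(j in [set: T]) a j = \sum_(j <- finmap.enum_fset (fset_set S)) a j.
Proof.
move=> fS a0 aS; rewrite -fsbig_finite // -esum_fset //.
rewrite [RHS]esum_mkcond; apply: eq_esum => j _.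
by case: ifPn => // /negP jS; rewrite aS // => Sj; apply: jS; rewrite inE.
Qed.

Lemma esum3D (T1 T2 T3 : choiceType) (F G : T1 -> T2 -> T3 -> \bar R) :
  (forall i j k, 0 <= F i j k) -> (forall i j k, 0 <= G i j k) ->
  \esum_(i in [set: T1]) \esum_(j in [set: T2]) \esum_(k in [set: T3]) (F i j k + G i j k) =
  \esum_(i in [set: T1]) \esum_(j in [set: T2]) \esum_(k in [set: T3]) F i j k +
  \esum_(i in [set: T1]) \esum_(j in [set: T2]) \esum_(k in [set: T3]) G i j k.
Proof.
move=> F0 G0; rewrite -esumD => [|i _|i _]; last 2 first.
- by apply: esum_ge0 => j _; apply: esum_ge0.
- by apply: esum_ge0 => j _; apply: esum_ge0.
apply: eq_esum => i _; rewrite -esumD => [|j _|j _]; try exact: esum_ge0.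
by apply: eq_esum => j _; rewrite -esumD.
Qed.

Lemma esum_single (T : choiceType) (a : T -> \bar R) i :
  (forall j, 0 <= a j) -> (forall j, j <> i -> a j = 0) ->
  \esum_(j in [set: T]) a j = a i.
Proof.
move=> a0 ai; rewrite (@esum_finite_support _ [set i]) //.
by rewrite fset_set1 finmap.big_seq_fset1.
Qed.

End esum_lemmas.

Section graph_distance.
Local Open Scope ereal_scope.
Context {R : realType} {V : choiceType} (adj : V -> V -> Prop).
Hypothesis hconn : connected_graph adj.
Local Notation d := (@gdist R V adj).
Local Notation geodesic := (@is_geodesic R V adj).

Lemma walk_cat x s1 s2 :
  walk adj x (s1 ++ s2) <-> walk adj x s1 /\ walk adj (last x s1) s2.
Proof. by elim: s1 x => [|z s1 IH] x /=; [tauto | rewrite IH; tauto]. Qed.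

Lemma gdist_le_size x s : walk adj x s -> d x (last x s) <= (size s)%:R%:E.
Proof. by move=> w; apply: ereal_inf_lbound; exists s. Qed.

Lemma gdist_shortest_walk x y :
  exists s, [/\ walk adj x s, last x s = y & d x y = (size s)%:R%:E].
Proof.
pose P n := `[< exists s, [/\ walk adj x s, last x s = y & size s = n] >].
have exP : exists n, P n.
  by have [s [ws ls]] := hconn x y; exists (size s); apply/asboolP; exists s.
case: (ex_minnP exP) => m /asboolP [s [ws ls sm]] mmin.
exists s; split => //; apply/eqP; rewrite eq_le -{1}ls gdist_le_size //=.
apply: le_ereal_inf_tmp => _ [s' [ws' ls'] <-].
by rewrite lee_fin ler_nat sm; apply: mmin; apply/asboolP; exists s'.
Qed.

Lemma gdist_natr x y : exists n : nat, d x y = n%:R%:E.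
Proof. by have [s [_ _ ->]] := gdist_shortest_walk x y; exists (size s). Qed.

Lemma gdist_ge0 x y : 0 <= d x y.
Proof. by have [n ->] := gdist_natr x y; rewrite lee_fin. Qed.

Lemma gdist_fineK x y : (fine (d x y))%:E = d x y.
Proof. by have [n ->] := gdist_natr x y. Qed.

Definition aligned (a u v b : V) : bool := d a b == d a u + d u v + d v b.

Lemma gdist_triangle x y z : d x z <= d x y + d y z.
Proof.
have [s1 [w1 l1 ->]] := gdist_shortest_walk x y.
have [s2 [w2 l2 ->]] := gdist_shortest_walk y z.
have w : walk adj x (s1 ++ s2) by apply/walk_cat; rewrite l1.
by have := gdist_le_size w; rewrite last_cat l1 l2 size_cat natrD EFinD.
Qed.

Lemma gdist_triangle3 a u v b : d a b <= d a u + d u v + d v b.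
Proof.
apply: le_trans (gdist_triangle a u b) _; rewrite -addeA leeD2l //.
exact: gdist_triangle.
Qed.

Lemma gdist_detour a u v b : ~~ aligned a u v b -> d a b + 1 <= d a u + d u v + d v b.
Proof.
rewrite /aligned; have := gdist_triangle3 a u v b.
have [n0 ->] := gdist_natr a b; have [n1 ->] := gdist_natr a u.
have [n2 ->] := gdist_natr u v; have [n3 ->] := gdist_natr v b.
rewrite -!EFinD -!natrD lee_fin eqe ler_nat eqr_nat => le neq.
by rewrite lee_fin natr1 ler_nat ltn_neqAle neq.
Qed.

Lemma geodesic_extend a b u p :
  geodesic u p -> aligned a u (last u p) b ->
  exists q j, [/\ geodesic a q, last a q = b, (j + size p <= size q)%N &
    forall i, (i <= size p)%N -> nth a (a :: q) (j + i) = nth u (u :: p) i].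
Proof.
move=> [wp dp] /eqP dab; set v := last u p in dp dab *.
have [sa [wa la da]] := gdist_shortest_walk a u.
have [sb [wb lb db]] := gdist_shortest_walk v b.
have lq : last a (sa ++ p ++ sb) = b by rewrite !last_cat la.
exists (sa ++ p ++ sb), (size sa); split => //.
- split; first by apply/walk_cat; rewrite la; split => //; apply/walk_cat.
  by rewrite lq dab da -dp db !size_cat !natrD !EFinD addeA.
- by rewrite !size_cat leq_add2l leq_addr.
- move=> i ip; have -> : a :: sa ++ p ++ sb = belast a sa ++ (u :: p) ++ sb.
    by rewrite -la -cat_rcons -lastI.
  rewrite nth_cat size_belast ltnNge leq_addr /= addKn -cat_cons nth_cat /= ltnS ip.
  by apply: set_nth_default; rewrite /= ltnS.
Qed.

End graph_distance.

Definition pairing {R : realType} {T : choiceType} (w pi : T -> R) : \bar R :=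
  \esum_(k in [set: T]) (w k * pi k)%:E.

Lemma transport_cost_pairing {R : realType} {V : choiceType} (adj : V -> V -> Prop) :
  connected_graph adj -> forall pi : V * V -> R,
  transport_cost adj pi = pairing (fun k => fine (gdist adj k.1 k.2)) pi.
Proof. by move=> hconn pi; apply: eq_esum => k _; rewrite EFinM gdist_fineK. Qed.

Section couplings.
Local Open Scope ereal_scope.
Context {R : realType} {V : choiceType}.
Variables (mu nu : V -> R) (p : V * V -> R).
Hypothesis cp : coupling mu nu p.

Lemma coupling_ge0 k : (0 <= p k)%R.
Proof. exact: cp.1. Qed.

Lemma coupling_row0 x y : mu x = 0%R -> p (x, y) = 0%R.
Proof.
move=> mx; have h0 z : 0 <= (p (x, z))%:E by rewrite lee_fin coupling_ge0.
by have := cp.2.1 x; rewrite mx => /(esum_eq0_term y h0) [].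
Qed.

Lemma coupling_col0 x y : nu y = 0%R -> p (x, y) = 0%R.
Proof.
move=> ny; have h0 z : 0 <= (p (z, y))%:E by rewrite lee_fin coupling_ge0.
by have := cp.2.2 y; rewrite ny => /(esum_eq0_term x h0) [].
Qed.

Lemma coupling_le_row x y : (p (x, y) <= mu x)%R.
Proof.
rewrite -lee_fin -cp.2.1; apply: (@le_term_esum _ _ _ (fun z => (p (x, z))%:E)) => //.
by move=> z; rewrite lee_fin coupling_ge0.
Qed.

Lemma coupling_ge0_row x : (0 <= mu x)%R.
Proof. exact: le_trans (coupling_ge0 (x, x)) (coupling_le_row x x). Qed.

Lemma coupling_ge0_col y : (0 <= nu y)%R.
Proof.
rewrite -lee_fin -cp.2.2; apply: esum_ge0 => z _.
by rewrite lee_fin coupling_ge0.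
Qed.

Lemma coupling_divrK_row x y : (p (x, y) / mu x * mu x)%R = p (x, y).
Proof.
have [mx0|mx0] := eqVneq (mu x) 0%R; first by rewrite coupling_row0 // !mul0r.
by rewrite divfK.
Qed.

Lemma coupling_divrK_col x y : (p (x, y) / nu y * nu y)%R = p (x, y).
Proof.
have [ny0|ny0] := eqVneq (nu y) 0%R; first by rewrite coupling_col0 // !mul0r.
by rewrite divfK.
Qed.

Lemma esumZ_coupling_row (c : R) x : (0 <= c)%R ->
  \esum_(y in [set: V]) (c * p (x, y))%:E = (c * mu x)%:E.
Proof.
move=> c0; under eq_esum do rewrite EFinM.
by rewrite ge0_esumZl ?cp.2.1 // => y; rewrite lee_fin coupling_ge0.
Qed.

Lemma esumZ_coupling_col (c : R) y : (0 <= c)%R ->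
  \esum_(x in [set: V]) (c * p (x, y))%:E = (c * nu y)%:E.
Proof.
move=> c0; under eq_esum do rewrite EFinM.
by rewrite ge0_esumZl ?cp.2.2 // => x; rewrite lee_fin coupling_ge0.
Qed.

End couplings.

Section glue.
Local Open Scope ereal_scope.
Context {R : realType} {V : choiceType}.
Variables (g0 gs gt g1 : V -> R) (p1 p2 p3 : V * V -> R).
Hypotheses (c1 : coupling g0 gs p1) (c2 : coupling gs gt p2) (c3 : coupling gt g1 p3).

Let p1_ge0 := coupling_ge0 c1.
Let p2_ge0 := coupling_ge0 c2.
Let p3_ge0 := coupling_ge0 c3.
Let gs_ge0 := coupling_ge0_row c2.
Let gt_ge0 := coupling_ge0_col c2.

(* Mass moved along [a -> q.1 -> q.2 -> b]: [p2] composed with the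
   conditional laws of [p1] given its second and of [p3] given its first
   coordinate.  Where a marginal vanishes, division by 0 gives 0, and so does
   the corresponding entry of [p2]. *)
Definition glue_weight (a b : V) (q : V * V) : R :=
  p1 (a, q.1) / gs q.1 * p2 q * (p3 (q.2, b) / gt q.2).

Definition glue (a b : V) : \bar R := \esum_(q in [set: V * V]) (glue_weight a b q)%:E.

Lemma glue_weight_ge0 a b q : (0 <= glue_weight a b q)%R.
Proof. by rewrite /glue_weight !mulr_ge0 ?invr_ge0. Qed.

Let gw0 a b q : 0 <= (glue_weight a b q)%:E.
Proof. by rewrite lee_fin glue_weight_ge0. Qed.

Lemma esum_glue_weight_last a u v :
  \esum_(b in [set: V]) (glue_weight a b (u, v))%:E = (p1 (a, u) / gs u * p2 (u, v))%:E.
Proof.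
rewrite -[in RHS](coupling_divrK_col c2 u v) [in RHS]mulrA -(esumZ_coupling_row c3).
  by apply: eq_esum => b _; rewrite /glue_weight /=; congr (_%:E); ring.
by rewrite !mulr_ge0 ?invr_ge0.
Qed.

Lemma esum_glue_weight_first b u v :
  \esum_(a in [set: V]) (glue_weight a b (u, v))%:E = (p2 (u, v) * (p3 (v, b) / gt v))%:E.
Proof.
transitivity ((p2 (u, v) / gs u * (p3 (v, b) / gt v) * gs u)%:E); last first.
  by rewrite mulrAC (coupling_divrK_row c2).
rewrite -(esumZ_coupling_col c1).
  by apply: eq_esum => a _; rewrite /glue_weight /=; congr (_%:E); ring.
by rewrite !mulr_ge0 ?invr_ge0.
Qed.

Lemma glue_weight_marginal1 a u :
  \esum_(v in [set: V]) \esum_(b in [set: V]) (glue_weight a b (u, v))%:E = (p1 (a, u))%:E.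
Proof.
under eq_esum do rewrite esum_glue_weight_last.
by rewrite (esumZ_coupling_row c2) ?(coupling_divrK_col c1) // divr_ge0.
Qed.

Lemma glue_weight_marginal2 q :
  \esum_(a in [set: V]) \esum_(b in [set: V]) (glue_weight a b q)%:E = (p2 q)%:E.
Proof.
case: q => u v.
transitivity (\esum_(a in [set: V]) (p2 (u, v) / gs u * p1 (a, u))%:E).
  by apply: eq_esum => a _; rewrite esum_glue_weight_last; congr (_%:E); ring.
by rewrite (esumZ_coupling_col c1) ?(coupling_divrK_row c2) // divr_ge0.
Qed.

Lemma glue_weight_marginal3 v b :
  \esum_(u in [set: V]) \esum_(a in [set: V]) (glue_weight a b (u, v))%:E = (p3 (v, b))%:E.
Proof.
under eq_esum do rewrite esum_glue_weight_first mulrC.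
by rewrite (esumZ_coupling_col c2) ?(coupling_divrK_row c3) // divr_ge0.
Qed.

Lemma glue_row a : \esum_(b in [set: V]) glue a b = (g0 a)%:E.
Proof.
rewrite /glue exchange_esum // esum_pairT => [|k]; last by apply: esum_ge0.
under eq_esum do rewrite glue_weight_marginal1.
exact: c1.2.1.
Qed.

Lemma glue_col b : \esum_(a in [set: V]) glue a b = (g1 b)%:E.
Proof.
rewrite /glue exchange_esum // esum_pairT => [|k]; last by apply: esum_ge0.
rewrite exchange_esum => [|*]; last exact: esum_ge0.
under eq_esum do rewrite glue_weight_marginal3.
exact: c3.2.2.
Qed.

Definition glue_plan (k : V * V) : R := fine (glue k.1 k.2).

Lemma glue_planE k : (glue_plan k)%:E = glue k.1 k.2.
Proof.
have glue_ge0 : 0 <= glue k.1 k.2 by apply: esum_ge0.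
have : glue k.1 k.2 <= (g0 k.1)%:E.
  by rewrite -glue_row; apply: (@le_term_esum _ _ _ (glue k.1)) => // b; apply: esum_ge0.
by rewrite /glue_plan; case: (glue k.1 k.2) glue_ge0.
Qed.

Lemma glue_plan_coupling : coupling g0 g1 glue_plan.
Proof.
split; first by move=> k; rewrite -lee_fin glue_planE; apply: esum_ge0.
split=> [a|b]; [rewrite -glue_row | rewrite -glue_col];
  by apply: eq_esum => ? _; rewrite glue_planE.
Qed.

Variable adj : V -> V -> Prop.
Hypothesis hconn : connected_graph adj.
Local Notation d := (@gdist R V adj).
Local Notation aligned := (aligned (R := R) adj).
Let d_ge0 := @gdist_ge0 R V adj hconn.
Let dK := @gdist_fineK R V adj hconn.
Let fine_d_ge0 x y : (0 <= fine (d x y))%R.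
Proof. by rewrite -lee_fin dK. Qed.

Ltac nonneg := move=> *; repeat first [ apply: esum_ge0 => * | apply: mule_ge0
  | apply: adde_ge0 | exact: d_ge0 | exact: gw0 | exact: fine_d_ge0 | (case: ifP => _ //)
  | rewrite lee_fin; first [exact: p1_ge0 | exact: p2_ge0 | exact: p3_ge0 | exact: fine_d_ge0] ].

Lemma transport_cost1_glue : transport_cost adj p1 =
  \esum_(a in [set: V]) \esum_(b in [set: V]) \esum_(q in [set: V * V])
    (d a q.1 * (glue_weight a b q)%:E).
Proof.
rewrite /transport_cost esum_pairT; last by nonneg.
apply: eq_esum => a _ /=; rewrite exchange_esum ?esum_pairT; try by nonneg.
apply: eq_esum => u _ /=.
rewrite -glue_weight_marginal1 -dK -ge0_esumZl; try by nonneg.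
by apply: eq_esum => v _; rewrite -ge0_esumZl; try by nonneg.
Qed.

Lemma transport_cost2_glue : transport_cost adj p2 =
  \esum_(a in [set: V]) \esum_(b in [set: V]) \esum_(q in [set: V * V])
    (d q.1 q.2 * (glue_weight a b q)%:E).
Proof.
transitivity (\esum_(a in [set: V]) \esum_(q in [set: V * V]) \esum_(b in [set: V])
    (d q.1 q.2 * (glue_weight a b q)%:E)); last first.
  by apply: eq_esum => a _; rewrite exchange_esum; try by nonneg.
rewrite exchange_esum; last by nonneg.
apply: eq_esum => q _.
rewrite -glue_weight_marginal2 -dK -ge0_esumZl; try by nonneg.
by apply: eq_esum => a _; rewrite -ge0_esumZl; try by nonneg.
Qed.

Lemma transport_cost3_glue : transport_cost adj p3 =
  \esum_(a in [set: V]) \esum_(b in [set: V]) \esum_(q in [set: V * V])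
    (d q.2 b * (glue_weight a b q)%:E).
Proof.
rewrite exchange_esum; last by nonneg.
rewrite /transport_cost esum_pairT; last by nonneg.
rewrite exchange_esum; last by nonneg.
apply: eq_esum => b _ /=.
transitivity (\esum_(a in [set: V]) \esum_(v in [set: V]) \esum_(u in [set: V])
    (d v b * (glue_weight a b (u, v))%:E)); last first.
  apply: eq_esum => a _; rewrite esum_pairT; last by nonneg.
  by rewrite exchange_esum; last by nonneg.
rewrite exchange_esum; last by nonneg.
apply: eq_esum => v _ /=.
rewrite -glue_weight_marginal3 -dK exchange_esum; last by nonneg.
rewrite -ge0_esumZl; try by nonneg.
by apply: eq_esum => a _; rewrite -ge0_esumZl; try by nonneg.
Qed.

Variables u v : V.

Lemma glue_cost_pointwise a b q :
  d a b * (glue_weight a b q)%:E +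
    (if (q == (u, v)) && ~~ aligned a u v b then (glue_weight a b q)%:E else 0)
  <= d a q.1 * (glue_weight a b q)%:E + d q.1 q.2 * (glue_weight a b q)%:E +
     d q.2 b * (glue_weight a b q)%:E.
Proof.
rewrite -!ge0_muleDl ?adde_ge0 //.
case: ifPn => [/andP[/eqP -> /(gdist_detour hconn) le]|_].
  by rewrite -[X in _ + X]mul1e -ge0_muleDl ?adde_ge0 // lee_pmul ?adde_ge0.
by rewrite adde0 lee_pmul // gdist_triangle3.
Qed.

Lemma glue_cost :
  \esum_(k in [set: V * V]) (d k.1 k.2 * glue k.1 k.2) +
  \esum_(k in [set: V * V])
    (if ~~ aligned k.1 u v k.2 then (glue_weight k.1 k.2 (u, v))%:E else 0)
  <= transport_cost adj p1 + transport_cost adj p2 + transport_cost adj p3.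
Proof.
rewrite transport_cost1_glue transport_cost2_glue transport_cost3_glue.
rewrite -!esum3D; try by nonneg.
rewrite !esum_pairT; try by nonneg.
rewrite -esumD; try by nonneg.
apply: le_esum => a _; rewrite -esumD; try by nonneg.
apply: le_esum => b _ /=.
rewrite /glue -[d a b]dK -ge0_esumZl; try by nonneg.
rewrite (_ : (if _ then _ else _) = \esum_(q in [set: V * V])
    (if (q == (u, v)) && ~~ aligned a u v b then (glue_weight a b q)%:E else 0)).
  rewrite -esumD; try by nonneg.
  by apply: le_esum => q _; rewrite dK glue_cost_pointwise.
rewrite (esum_single (i := (u, v))) ?eqxx //; first by nonneg.
by move=> q /eqP/negPf ->.
Qed.

Lemma glue_plan_aligned_mass :
  (p2 (u, v))%:E <=
  \esum_(k in [set: V * V])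
    (if ~~ aligned k.1 u v k.2 then (glue_weight k.1 k.2 (u, v))%:E else 0) +
  pairing (fun k => (aligned k.1 u v k.2)%:R) glue_plan.
Proof.
rewrite -glue_weight_marginal2.
rewrite -(@esum_pairT _ _ _ (fun k => (glue_weight k.1 k.2 (u, v))%:E)) /pairing -?esumD;
  try by nonneg.
  apply: le_esum => -[a b] _ /=; case: (aligned a u v b) => /=.
    rewrite add0e mul1r glue_planE /=.
    by apply: (@le_term_esum _ _ _ (fun q => (glue_weight a b q)%:E)).
  by rewrite mul0r adde0.
by move=> k _; rewrite lee_fin mulr_ge0 // -lee_fin glue_planE; apply: esum_ge0.
Qed.

End glue.

Lemma increasing_seq_ge (psi : nat -> nat) : increasing_seq psi -> forall n, (n <= psi n)%N.
Proof.
move=> /increasing_seqP incr; elim=> // n IH.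
by apply: leq_ltn_trans IH _; exact: incr.
Qed.

Lemma cvg_subseq {T : topologicalType} (u : nat -> T) (psi : nat -> nat) (l : T) :
  increasing_seq psi -> u n @[n --> \oo] --> l -> u (psi n) @[n --> \oo] --> l.
Proof.
move=> incr; apply: (cvg_comp psi u) => P [N _ PN]; exists N => // n /= Nn.
by apply: PN; rewrite /= (leq_trans Nn) // increasing_seq_ge.
Qed.

Lemma cvg_sum_seq {R : realType} (I : eqType) (r : seq I) (F : I -> nat -> R) (L : I -> R) :
  (forall i, i \in r -> F i n @[n --> \oo] --> L i) ->
  (\sum_(i <- r) F i n) @[n --> \oo] --> \sum_(i <- r) L i.
Proof.
move=> h; rewrite big_seq; under eq_fun do rewrite big_seq.
by apply: cvg_big => //; exact: add_continuous.
Qed.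

Lemma bolzano_weierstrass_seq {R : realType} (X : eqType) (r : seq X) (u : nat -> X -> R) :
  (forall x, x \in r -> bounded_fun (u ^~ x)) ->
  exists2 psi : nat -> nat, increasing_seq psi &
    forall x, x \in r -> cvgn (fun n => u (psi n) x).
Proof.
elim: r => [_|x r IH bnd]; first by exists id.
have [psi incr_psi cvg_r] := IH (fun y yr => bnd y (mem_behead (s := x :: r) yr)).
have bnd_x : bounded_fun (fun n => u (psi n) x).
  have [M [Mreal HM]] := bnd x (mem_head x r).
  by exists M; split => // N MN n _; exact: HM.
have [phi incr_phi cvg_x] := bolzano_weierstrass bnd_x.
exists (psi \o phi) => [m n /=|y]; first by rewrite incr_psi; exact: incr_phi.
rewrite in_cons => /predU1P[->//|yr].
have /cvg_ex[l ul] := cvg_r y yr; apply/cvg_ex; exists l.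
exact: (cvg_subseq (u := fun n => u (psi n) y)).
Qed.

Section finite_support.
Local Open Scope ereal_scope.
Context {R : realType} {V : choiceType}.
Variables g0 g1 : V -> R.
Hypotheses (fin0 : fin_supp g0) (fin1 : fin_supp g1).

Let r0 := finmap.enum_fset (fset_set [set x | g0 x != 0%R]).
Let r1 := finmap.enum_fset (fset_set [set x | g1 x != 0%R]).

Let mem_r0 a : (a \in r0) = (g0 a != 0%R).
Proof. by rewrite in_fset_set //; apply/idP/idP => [/set_mem|/mem_set]. Qed.

Let mem_r1 b : (b \in r1) = (g1 b != 0%R).
Proof. by rewrite in_fset_set //; apply/idP/idP => [/set_mem|/mem_set]. Qed.

Lemma esum_pair_supp (F : V * V -> \bar R) :
  (forall k, 0 <= F k) -> (forall a b, (a \notin r0) || (b \notin r1) -> F (a, b) = 0) ->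
  \esum_(k in [set: V * V]) F k = \sum_(a <- r0) \sum_(b <- r1) F (a, b).
Proof.
move=> F0 Fout; rewrite esum_pairT // (esum_finite_support fin0) => [|a|a].
- apply: eq_bigr => a _; rewrite (esum_finite_support fin1) // => b /negP.
  by rewrite -mem_r1 => b1; rewrite Fout ?b1 ?orbT.
- exact: esum_ge0.
- by move=> /negP; rewrite -mem_r0 => a0; apply: esum1 => b _; rewrite Fout ?a0.
Qed.

Section coupling.
Variable pi : V * V -> R.
Hypothesis cpi : coupling g0 g1 pi.

Lemma coupling_supp a b : (a \notin r0) || (b \notin r1) -> pi (a, b) = 0%R.
Proof.
rewrite mem_r0 mem_r1 !negbK => /orP[/eqP a0|/eqP b0].
  exact: coupling_row0 cpi _ _ a0.
exact: coupling_col0 cpi _ _ b0.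
Qed.

Lemma pairing_supp (w : V * V -> R) : (forall k, 0 <= w k)%R ->
  pairing w pi = (\sum_(a <- r0) \sum_(b <- r1) w (a, b) * pi (a, b))%:E.
Proof.
move=> w0; rewrite /pairing esum_pair_supp => [|k|a b /coupling_supp ->].
- by rewrite -sumEFin; apply: eq_bigr => a _; rewrite -sumEFin.
- by rewrite lee_fin mulr_ge0 ?(coupling_ge0 cpi).
- by rewrite mulr0.
Qed.

Lemma coupling_sum_row a : (\sum_(b <- r1) pi (a, b))%R = g0 a.
Proof.
apply/eqP; rewrite -eqe -sumEFin -cpi.2.1 (esum_finite_support fin1) //.
  by move=> b; rewrite lee_fin (coupling_ge0 cpi).
by move=> b /negP; rewrite -mem_r1 => b1; rewrite coupling_supp ?b1 ?orbT.
Qed.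

Lemma coupling_sum_col b : (\sum_(a <- r0) pi (a, b))%R = g1 b.
Proof.
apply/eqP; rewrite -eqe -sumEFin -cpi.2.2 (esum_finite_support fin0) //.
  by move=> a; rewrite lee_fin (coupling_ge0 cpi).
by move=> a /negP; rewrite -mem_r0 => a0; rewrite coupling_supp ?a0.
Qed.

End coupling.

Definition restrict_supp (g : V * V -> R) (k : V * V) : R :=
  if (k.1 \in r0) && (k.2 \in r1) then g k else 0%R.

Lemma restrict_supp_coupling (g : V * V -> R) :
  (forall a b, a \in r0 -> b \in r1 -> 0 <= g (a, b))%R ->
  (forall a, a \in r0 -> \sum_(b <- r1) g (a, b) = g0 a)%R ->
  (forall b, b \in r1 -> \sum_(a <- r0) g (a, b) = g1 b)%R ->
  coupling g0 g1 (restrict_supp g).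
Proof.
move=> gge0 grow gcol.
have r_ge0 k : (0 <= restrict_supp g k)%R.
  by case: k => a b; rewrite /restrict_supp; case: ifP => // /andP[]; exact: gge0.
split=> //; split=> [a|b].
- have [a0|/negPf a0] := boolP (a \in r0); last first.
    have /eqP -> : g0 a == 0%R by apply/negbNE; rewrite -mem_r0 a0.
    by apply: esum1 => b _; rewrite /restrict_supp /= a0.
  rewrite (esum_finite_support fin1) => [|b|b /negP]; last 2 first.
  + by rewrite lee_fin r_ge0.
  + by rewrite -mem_r1 => /negPf b1; rewrite /restrict_supp /= b1 andbF.
  rewrite sumEFin -grow //; congr (_%:E); apply: eq_big_seq => b b1.
  by rewrite /restrict_supp /= a0 b1.
- have [b1|/negPf b1] := boolP (b \in r1); last first.
    have /eqP -> : g1 b == 0%R by apply/negbNE; rewrite -mem_r1 b1.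
    by apply: esum1 => a _; rewrite /restrict_supp /= b1 andbF.
  rewrite (esum_finite_support fin0) => [|a|a /negP]; last 2 first.
  + by rewrite lee_fin r_ge0.
  + by rewrite -mem_r0 => /negPf a0; rewrite /restrict_supp /= a0.
  rewrite sumEFin -gcol //; congr (_%:E); apply: eq_big_seq => a a0.
  by rewrite /restrict_supp /= a0 b1.
Qed.

Lemma coupling_subseq_cvg (pi : nat -> V * V -> R) :
  (forall n, coupling g0 g1 (pi n)) ->
  exists2 psi : nat -> nat, increasing_seq psi &
  exists2 g : V * V -> R, coupling g0 g1 g & forall w : V * V -> R,
    (\sum_(a <- r0) \sum_(b <- r1) w (a, b) * pi (psi n) (a, b))%R @[n --> \oo] -->
    (\sum_(a <- r0) \sum_(b <- r1) w (a, b) * g (a, b))%R.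
Proof.
move=> cpi.
have bnd k : k \in [seq (a, b) | a <- r0, b <- r1] -> bounded_fun (pi ^~ k).
  move=> _; exists (g0 k.1); split; first exact: num_real.
  move=> N ltN n _ /=; rewrite ger0_norm ?(coupling_ge0 (cpi n)) //.
  by apply: le_trans (ltW ltN); case: k ltN => a b _; exact: coupling_le_row.
have [psi incr cvg_pi] := bolzano_weierstrass_seq bnd.
pose g k := lim (pi (psi n) k @[n --> \oo]).
have cvg_g a b : a \in r0 -> b \in r1 -> pi (psi n) (a, b) @[n --> \oo] --> g (a, b).
  by move=> a0 b1; apply: cvg_pi; apply/allpairsP; exists (a, b).
exists psi => //; exists (restrict_supp g) => [|w].
  apply: restrict_supp_coupling.
  - move=> a b a0 b1; apply: limr_ge; first by apply/cvg_ex; exists (g (a, b)); apply: cvg_g.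
    by exists 0%N => // n _; exact: coupling_ge0 (cpi _) _.
  - move=> a a0; have := cvg_sum_seq (fun b (b1 : b \in r1) => cvg_g a b a0 b1).
    move=> /(cvg_lim (@Rhausdorff R)) <-.
    by under eq_fun do rewrite (coupling_sum_row (cpi _)); rewrite lim_cst.
  - move=> b b1; have := cvg_sum_seq (fun a (a0 : a \in r0) => cvg_g a b a0 b1).
    move=> /(cvg_lim (@Rhausdorff R)) <-.
    by under eq_fun do rewrite (coupling_sum_col (cpi _)); rewrite lim_cst.
apply: cvg_sum_seq => a a0; apply: cvg_sum_seq => b b1.
by rewrite /restrict_supp /= a0 b1; apply: cvgMl_tmp; exact: cvg_g.
Qed.

Lemma coupling_limit (w1 w2 : V * V -> R) (A B : R) :
  (forall k, 0 <= w1 k)%R -> (forall k, 0 <= w2 k)%R ->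
  (forall e, (0 < e)%R -> exists pi, [/\ coupling g0 g1 pi,
     pairing w1 pi <= (A + e)%:E & (B - e)%:E <= pairing w2 pi]) ->
  exists pi, [/\ coupling g0 g1 pi, pairing w1 pi <= A%:E & B%:E <= pairing w2 pi].
Proof.
move=> w1_ge0 w2_ge0 happrox.
have /choice[pi hpi] n : exists pi, [/\ coupling g0 g1 pi,
    pairing w1 pi <= (A + harmonic n)%:E & (B - harmonic n)%:E <= pairing w2 pi].
  exact/happrox/harmonic_gt0.
have cpi n : coupling g0 g1 (pi n) by case: (hpi n).
have [psi incr [g cg cvg_w]] := coupling_subseq_cvg cpi.
have cvg_h : harmonic (psi n) @[n --> \oo] --> (0 : R)%R := cvg_subseq incr cvg_harmonic.
exists g; split => //; rewrite pairing_supp // lee_fin.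
- rewrite -[A]addr0; apply: ler_cvg_to (cvg_w w1) (cvgD (cvg_cst A) cvg_h) _.
  by exists 0%N => // n _ /=; case: (hpi (psi n)) => c + _; rewrite pairing_supp.
- rewrite -[B]subr0; apply: ler_cvg_to (cvgB (cvg_cst B) cvg_h) (cvg_w w2) _.
  by exists 0%N => // n _ /=; case: (hpi (psi n)) => c _; rewrite pairing_supp.
Qed.

End finite_support.

Section W1_facts.
Local Open Scope ereal_scope.
Context {R : realType} {V : choiceType} (adj : V -> V -> Prop).
Hypothesis hconn : connected_graph adj.

Lemma W1_le_cost (mu nu : V -> R) pi :
  coupling mu nu pi -> W1 adj mu nu <= transport_cost adj pi.
Proof. by move=> cpi; apply: ereal_inf_lbound; exists pi. Qed.

Lemma W1_ge0 (mu nu : V -> R) : 0 <= W1 adj mu nu.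
Proof.
apply: le_ereal_inf_tmp => _ [pi cpi <-]; apply: esum_ge0 => k _.
by rewrite mule_ge0 ?gdist_ge0 // lee_fin (coupling_ge0 cpi).
Qed.

Lemma W1_near_optimal (mu nu : V -> R) (e : R) :
  (0 < e)%R -> W1 adj mu nu \is a fin_num ->
  exists2 pi, coupling mu nu pi & transport_cost adj pi <= W1 adj mu nu + e%:E.
Proof.
move=> e0 fin; have [_ [pi cpi <-] lt] := lb_ereal_inf_adherent e0 fin.
by exists pi => //; exact: ltW.
Qed.

Lemma product_coupling (mu nu : V -> R) :
  prob_distr mu -> prob_distr nu -> coupling mu nu (fun k => mu k.1 * nu k.2)%R.
Proof.
move=> [mu0 mu1] [nu0 nu1]; split; first by move=> k; rewrite mulr_ge0.
split=> [x|y] /=; under eq_esum do rewrite EFinM.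
  by rewrite ge0_esumZl // nu1 mule1.
by under eq_esum do rewrite muleC; rewrite ge0_esumZl // mu1 mule1.
Qed.

Lemma W1_fin_num (mu nu : V -> R) : prob_distr mu -> prob_distr nu ->
  fin_supp mu -> fin_supp nu -> W1 adj mu nu \is a fin_num.
Proof.
move=> pmu pnu fmu fnu; have cpi := product_coupling pmu pnu.
rewrite ge0_fin_numE ?W1_ge0 //; apply: le_lt_trans (W1_le_cost cpi) _.
rewrite (transport_cost_pairing hconn) (pairing_supp fmu fnu cpi) ?ltry // => k.
by rewrite -lee_fin gdist_fineK // gdist_ge0.
Qed.

Lemma W1_geodesic_split (f : R -> V -> R) (s t : R) : W1_geodesic adj f ->
  (0 <= s)%R -> (s <= t)%R -> (t <= 1)%R ->
  W1 adj (f 0%R) (f s) + W1 adj (f s) (f t) + W1 adj (f t) (f 1%R) = W1 adj (f 0%R) (f 1%R).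
Proof.
move=> [_ hW] s0 st t1.
have i0 : (0 <= (0 : R) <= 1)%R by rewrite lexx ler01.
have i1 : (0 <= (1 : R) <= 1)%R by rewrite lexx ler01.
have s01 : (0 <= s <= 1)%R by rewrite s0 (le_trans st t1).
have t01 : (0 <= t <= 1)%R by rewrite t1 (le_trans s0 st).
rewrite (hW 0%R s) // (hW s t) // (hW t 1%R) // -!ge0_muleDl ?adde_ge0 ?lee_fin //.
by rewrite -!EFinD !ger0_norm ?subr_ge0 // (_ : _ + _ = 1)%R ?mul1e //; ring.
Qed.

End W1_facts.

Section aligned_optimal_support.
Local Open Scope ereal_scope.
Context {R : realType} {V : choiceType} (adj : V -> V -> Prop).
Hypothesis hconn : connected_graph adj.
Variables g0 gs gt g1 : V -> R.
Hypothesis hW : W1 adj g0 gs + W1 adj gs gt + W1 adj gt g1 = W1 adj g0 g1.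
Hypothesis hfin : W1 adj g0 g1 \is a fin_num.
Variables (p2 : V * V -> R) (u v : V).
Hypothesis hp2 : optimal_coupling adj gs gt p2.

Local Notation dist := (fun k : V * V => fine (gdist adj k.1 k.2)).
Local Notation aligned_uv := (fun k : V * V => (aligned (R := R) adj k.1 u v k.2)%:R : R).

Lemma W1_parts_fin_num : [/\ W1 adj g0 gs \is a fin_num, W1 adj gs gt \is a fin_num &
  W1 adj gt g1 \is a fin_num].
Proof.
have W0 := @W1_ge0 R V adj hconn.
have fin_le x : 0 <= x -> x <= W1 adj g0 g1 -> x \is a fin_num.
  by move=> x0 le; rewrite ge0_fin_numE // (le_lt_trans le) // ltey_eq hfin.
split; apply: fin_le; rewrite ?W0 // -hW.
- by rewrite -addeA leeDl // adde_ge0 ?W0.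
- by apply: le_trans _ (leeDl _ (W0 gt g1)); exact: leeDr (W0 _ _).
- by rewrite leeDr // adde_ge0 ?W0.
Qed.

Lemma glue_approx (e : R) : (0 < e)%R -> exists pi, [/\ coupling g0 g1 pi,
  pairing dist pi <= (fine (W1 adj g0 g1) + e)%:E & (p2 (u, v) - e)%:E <= pairing aligned_uv pi].
Proof.
move=> e0; have [fin01 fin12 fin23] := W1_parts_fin_num.
have e2 : (0 < e / 2)%R by rewrite divr_gt0.
have [p1 c1 le1] := W1_near_optimal e2 fin01.
have [p3 c3 le3] := W1_near_optimal e2 fin23.
have c2 := hp2.1.
have cpi := glue_plan_coupling c1 c2 c3.
have := glue_cost c1 c2 c3 hconn u v.
set Bad := \esum_(k in _) (if _ then _ else _).
have -> : \esum_(k in [set: V * V]) (gdist adj k.1 k.2 * glue gs gt p1 p2 p3 k.1 k.2) =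
    transport_cost adj (glue_plan gs gt p1 p2 p3).
  by apply: eq_esum => k _; rewrite (glue_planE c1 c2 c3).
have Bad0 : 0 <= Bad.
  by apply: esum_ge0 => k _; case: ifP => // _; rewrite lee_fin (glue_weight_ge0 c1 c2 c3).
have total : transport_cost adj p1 + transport_cost adj p2 + transport_cost adj p3 <=
    W1 adj g0 g1 + e%:E.
  rewrite hp2.2; apply: le_trans (leeD (leeD le1 (lexx _)) le3) _.
  rewrite -hW -(fineK fin01) -(fineK fin12) -(fineK fin23) -!EFinD lee_fin; lra.
move=> /le_trans /(_ total) costD.
exists (glue_plan gs gt p1 p2 p3); split => //.
  rewrite -(transport_cost_pairing hconn) EFinD (fineK hfin).
  exact: le_trans (leeDl _ Bad0) costD.
have Bad_le : Bad <= e%:E.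
  rewrite -(leeD2lE _ _ hfin).
  exact: le_trans (leeD2r Bad (W1_le_cost adj cpi)) costD.
rewrite EFinB leeBlDl //.
apply: le_trans (glue_plan_aligned_mass c1 c2 c3 adj u v) _.
exact: leeD2r Bad_le.
Qed.

Lemma aligned_opt_support : fin_supp g0 -> fin_supp g1 -> (0 < p2 (u, v))%R ->
  exists a b, opt_support adj g0 g1 a b /\ aligned (R := R) adj a u v b.
Proof.
move=> fin0 fin1 uv_gt0.
have [||pi [cpi cost mass]] := coupling_limit fin0 fin1 _ _ glue_approx.
- by move=> k; rewrite -lee_fin gdist_fineK // gdist_ge0.
- by move=> k; rewrite ler0n.
have opt : optimal_coupling adj g0 g1 pi.
  split=> //; apply/le_anti; rewrite W1_le_cost // andbT.
  by rewrite (transport_cost_pairing hconn) -(fineK hfin).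
have [[a b] /andP[al pab]] : exists k, aligned (R := R) adj k.1 u v k.2 && (0 < pi k)%R.
  apply: contrapT => none.
  have : 0 < pairing aligned_uv pi by apply: lt_le_trans mass; rewrite lte_fin.
  rewrite /pairing esum1 ?ltxx // => k _; case al: (aligned _ _ _ _ _); last by rewrite mul0r.
  have : ~~ (0 < pi k)%R by apply/negP => pk; apply: none; exists k; rewrite al.
  by rewrite mul1r -leNgt => pk0; apply/eqP; rewrite eqe eq_le pk0 (coupling_ge0 cpi).
by exists a, b; split => //; exists pi.
Qed.

End aligned_optimal_support.

Theorem proposition2p14 (R : realType) (V : choiceType) (adj : V -> V -> Prop)
  (adj_sym : forall x y, adj x y -> adj y x)
  (adj_irr : forall x, ~ adj x x)
  (hlf : locally_finite adj) (hconn : connected_graph adj)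
  (f : R -> V -> R)
  (hf0 : fin_supp (f 0)) (hf1 : fin_supp (f 1))
  (hgeod : W1_geodesic adj f)
  (s t : R) (hs : 0 <= s) (hst : s <= t) (ht : t <= 1)
  (x y : V) :
  W1_orient adj (f s) (f t) x y -> W1_orient adj (f 0) (f 1) x y.
Proof.
move=> [xy [u [p [k [geo [[pi [opt_pi uv_gt0]] [kp [nx ny]]]]]]]].
have prob r : 0 <= r <= 1 -> prob_distr (f r) := hgeod.1 r.
have hfin : W1 adj (f 0) (f 1) \is a fin_num.
  by apply: W1_fin_num => //; apply: prob; rewrite lexx ler01.
have [a [b [opt_ab al]]] := aligned_opt_support hconn (W1_geodesic_split hgeod hs hst ht)
  hfin opt_pi hf0 hf1 uv_gt0.
have [q [j [geo_q lq jq nq]]] := geodesic_extend hconn geo al.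
split=> //; exists a, q, (j + k)%N; split=> //; split; first by rewrite lq.
split; first by rewrite (leq_trans _ jq) // ltn_add2l.
by rewrite -addnS !nq // ltnW.
Qed.
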